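(* Let $X$ be a compact metric space and $f\colon X\to X$ a positively $n$-expansive homeomorphism. Then the non-wandering set $\Omega(f)$ is finite if and only if $X$ is finite.
   Context: $f$ is positively $n$-expansive if there exists $c>0$ such that for every $x\in X$ the set $W^s_c(x)=\{y: d(f^k(y),f^k(x))\leq c \ \forall k\geq0\}$ has at most $n$ points. A point $x$ is non-wandering if for every open $U\ni x$ there is $k>0$ with $f^k(U)\cap U\neq\emptyset$; $\Omega(f)$ is the set of non-wandering points. *)

From HB Require Import structures.
From mathcomp Require Import all_boot all_order all_algebra.
From mathcomp Require Import all_classical all_reals all_analysis.
Set Implicit Arguments. Unset Strict Implicit. Unset Printing Implicit Defensive.
Import Order.TTheory GRing.Theory Num.Theory.
Local Open Scope classical_set_scope.
Local Open Scope ring_scope.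

Definition homeomorphism (T : topologicalType) (f : T -> T) : Prop :=
  exists g : T -> T, [/\ cancel f g, cancel g f, continuous f & continuous g].

Definition stable_set (R : realType) (X : metricType R) (f : X -> X) (c : R) (x : X)
  : set X :=
  [set y | forall k : nat, mdist (iter k f y) (iter k f x) <= c].

Definition at_most_n_points (T : eqType) (n : nat) (A : set T) : Prop :=
  forall s : seq T, uniq s -> (forall y, y \in s -> A y) -> (size s <= n)%N.

Definition pos_n_expansive (R : realType) (X : metricType R) (n : nat) (f : X -> X)
  : Prop :=
  exists2 c : R, 0 < c & forall x : X, at_most_n_points n (stable_set f c x).

Definition nonwandering (T : topologicalType) (f : T -> T) (x : T) : Prop :=
  forall U : set T, open U -> U x ->
    exists2 k : nat, (0 < k)%N & (iter k f @` U) `&` U !=set0.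

Definition Omega (T : topologicalType) (f : T -> T) : set T := [set x | nonwandering f x].

(* If Omega(f) is finite, its points are a positive distance apart. By
   compactness every forward orbit eventually stays close to Omega(f), and
   continuity of f then forces it to be shadowed by the orbit of a point of the
   f-invariant set Omega(f). So from some time on the orbit of x lies in finitely
   many stable sets W^s_c, each of at most n points: the forward orbit of x is
   finite, and as f is injective x is periodic, hence non-wandering. Thus
   X = Omega(f). *)

From HB Require Import structures.
From mathcomp Require Import all_boot all_order all_algebra.
From mathcomp Require Import all_classical all_reals all_analysis.
From mathcomp Require Import finmap lra.
Set Implicit Arguments. Unset Strict Implicit. Unset Printing Implicit Defensive.
Import Order.TTheory GRing.Theory Num.Theory.
Local Open Scope classical_set_scope.
Local Open Scope ring_scope.

Lemma at_most_n_points_finite (T : choiceType) (n : nat) (A : set T) :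
  at_most_n_points n A -> finite_set A.
Proof.
move=> An; apply: contrapT => /(infinite_set_fset n.+1)[B BA nB].
by have := An _ (fset_uniq B) BA; rewrite leqNgt nB.
Qed.

Lemma iter_inj (T : Type) (f : T -> T) (k : nat) :
  injective f -> injective (iter k f).
Proof. by move=> f_inj; elim: k => [|k IHk] x y //= /f_inj/IHk. Qed.

Lemma finite_orbit_periodic (T : Type) (f : T -> T) (x : T) :
  injective f -> finite_set (range (fun m => iter m f x)) ->
  exists2 k, (0 < k)%N & iter k f x = x.
Proof.
move=> f_inj orbit_fin.
have [m1 [m2 [m12 orbit_eq]]] :
    exists m1 m2, (m1 < m2)%N /\ iter m1 f x = iter m2 f x.
  apply: contrapT => orbit_noncollapse; apply: infinite_nat.
  suff orbit_inj : {in [set: nat] &, injective (fun m => iter m f x)}.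
    by rewrite -(eq_finite_set (inj_card_eq orbit_inj)).
  move=> m m' _ _ eq_mm'; apply/eqP; apply: contrapT => /negP.
  case: ltngtP => // [mm'|m'm] _; apply: orbit_noncollapse.
    by exists m, m'.
  by exists m', m.
exists (m2 - m1)%N; first by rewrite subn_gt0.
by apply: (@iter_inj _ f m1 f_inj); rewrite -iterD subnKC ?orbit_eq // ltnW.
Qed.

Lemma Omega_invariant (T : topologicalType) (f : T -> T) (x : T) :
  continuous f -> Omega f x -> Omega f (f x).
Proof.
move=> f_cont x_nw U U_open Ufx.
have [|k k_gt0 [_ [[z Uz <-] Ukz]]] := x_nw (f @^-1` U) _ Ufx.
  exact: open_comp.
exists k => //; exists (f (iter k f z)); split => //.
by exists (f z) => //; rewrite -iterSr.
Qed.

Lemma periodic_Omega (T : topologicalType) (f : T -> T) (x : T) (k : nat) :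
  (0 < k)%N -> iter k f x = x -> Omega f x.
Proof. by move=> k_gt0 fkx U _ Ux; exists k => //; exists x; split => //; exists x. Qed.

Lemma Omega_cluster_orbit (T : topologicalType) (f : T -> T) (x : T) (A : set nat) :
  compact [set: T] -> (forall N, exists2 k, (N <= k)%N & A k) ->
  exists2 y, Omega f y & forall U, nbhs y U -> exists2 k, A k & U (iter k f x).
Proof.
move=> T_compact A_unbounded.
pose tail N := [set iter k f x | k in A `&` [set k | (N <= k)%N]].
pose G := filter_from [set: nat] tail.
have G_proper : ProperFilter G.
  apply: filter_from_proper; last first.
    by move=> N _; have [k Nk Ak] := A_unbounded N; exists (iter k f x), k.
  apply: filter_from_filter; first by exists 0%N.
  move=> N M _ _; exists (maxn N M) => // _ [k [Ak /= /[!geq_max] /andP[Nk Mk]] <-].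
  by split; exists k.
have [y [_ y_cluster]] := T_compact G G_proper (ltac:(by exists 0%N)).
have visit N U : nbhs y U -> exists2 k, (A k /\ (N <= k)%N) & U (iter k f x).
  move=> yU; have [_ [[k Ak <-] Ukx]] := y_cluster (tail N) U (ltac:(by exists N)) yU.
  by exists k.
exists y => [U U_open Uy|U /(visit 0%N)[k [Ak _] Ukx]]; last by exists k.
have yU : nbhs y U by exact: open_nbhs_nbhs.
have [k1 _ Uk1] := visit 0%N U yU.
have [k2 [_ k12] Uk2] := visit k1.+1 U yU.
exists (k2 - k1)%N; first by rewrite subn_gt0.
exists (iter k2 f x); split => //; exists (iter k1 f x) => //.
by rewrite -iterD subnK // ltnW.
Qed.

Lemma Omega_attracts (R : realType) (X : metricType R) (f : X -> X) (x : X) (eta : R) :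
  compact [set: X] -> 0 < eta ->
  \forall k \near \oo, exists2 y, Omega f y & mdist y (iter k f x) < eta.
Proof.
move=> X_compact eta_gt0; apply: contrapT => not_near.
pose far k := forall y, Omega f y -> eta <= mdist y (iter k f x).
have far_unbounded N : exists2 k, (N <= k)%N & far k.
  apply: contrapT => no_far; apply: not_near; exists N => // k /= Nk.
  apply: contrapT => no_close; apply: no_far; exists k => // y Oy.
  by rewrite leNgt; apply/negP => close; apply: no_close; exists y.
have [y Oy /(_ _ (nbhsx_ballx y eta eta_gt0))[k far_k]] :=
  Omega_cluster_orbit f x X_compact far_unbounded.
by rewrite ballEmdist /= ltNge far_k.
Qed.

Lemma near_forall_fset (T : choiceType) (U : Type) (F : set_system U) {FF : Filter F}
    (D : {fset T}) (P : T -> U -> Prop) :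
  (forall i, i \in D -> \forall u \near F, P i u) ->
  \forall u \near F, forall i, i \in D -> P i u.
Proof. by move=> /(filter_bigI FF); apply: filterS => u Pu i /Pu. Qed.

Section metric_fset.
Variables (R : realType) (X : metricType R).

Lemma fset_separated (D : {fset X}) :
  \forall r \near 0^'+, {in D &, forall p q, mdist p q < r -> p = q}.
Proof.
have sep (p q : X) : \forall r \near 0^'+, mdist p q < r -> p = q.
  have [->|pq] := eqVneq p q; first exact: nearW.
  have pq_gt0 : 0 < mdist p q by rewrite mdist_gt0.
  apply: filterS (nbhs_right_lt pq_gt0) => r rpq pqr.
  by have := lt_trans pqr rpq; rewrite ltxx.
have all_sep : \forall r \near 0^'+,
    forall p, p \in D -> forall q, q \in D -> mdist p q < r -> p = q.
  by apply: near_forall_fset => p _; apply: near_forall_fset => q _; exact: sep.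
by apply: filterS all_sep => r r_sep p q pD qD; apply: r_sep.
Qed.

Lemma fset_shadowing (f : X -> X) (D : {fset X}) :
  continuous f -> {homo f : q / q \in D} ->
  \forall eta \near 0^'+, forall y,
    (forall k, exists2 q, q \in D & mdist (iter k f y) q <= eta) ->
    exists2 q, q \in D & forall k, mdist (iter k f y) (iter k f q) <= eta.
Proof.
move=> f_cont f_D.
near (0 : R)^'+ => r.
have r_gt0 : 0 < r by near: r; exact: nbhs_right_gt.
have r_sep : {in D &, forall p q, mdist p q < r -> p = q}.
  by near: r; exact: fset_separated.
near=> eta => y y_close.
have f_cont_D : forall q, q \in D ->
    forall z, mdist q z <= eta -> mdist (f q) (f z) <= r / 3.
  near: eta; apply: near_forall_fset => q _.
  apply/metricType_numDomainType.nbhsr0P.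
  by apply: metricType_numDomainType.cvgr_dist_le; [exact: f_cont | rewrite divr_gt0].
have eta_small : eta <= r / 3 by near: eta; apply: nbhs_right_le; rewrite divr_gt0.
have [q0 q0D close0] := y_close 0%N.
suff tracking j : iter j f q0 \in D /\ mdist (iter j f y) (iter j f q0) <= eta.
  by exists q0 => // j; have [] := tracking j.
elim: j => [|j [qjD close_j]]; first by [].
have [q' q'D close'] := y_close j.+1.
(* f q_j and q' lie in D and are less than r apart. *)
suff -> : iter j.+1 f q0 = q' by [].
rewrite iterS; apply: r_sep => //; first exact: f_D.
apply: le_lt_trans (metric_triangle _ (iter j.+1 f y) _) _.
have f_close : mdist (f (iter j f q0)) (iter j.+1 f y) <= r / 3.
  by rewrite iterS; apply: f_cont_D; rewrite // metric_sym.
lra.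
Unshelve. all: end_near.
Qed.
End metric_fset.

Lemma shadowed_orbit_finite (R : realType) (X : metricType R) (f : X -> X) (n : nat)
    (c : R) (D : {fset X}) (y q : X) :
  (forall x, at_most_n_points n (stable_set f c x)) -> {homo f : p / p \in D} ->
  q \in D -> (forall k, mdist (iter k f y) (iter k f q) <= c) ->
  finite_set (range (fun m => iter m f y)).
Proof.
move=> W_small f_D qD y_shadow.
apply: (@sub_finite_set _ _ (\bigcup_(p in [set` D]) stable_set f c p)).
  move=> _ [m _ <-]; exists (iter m f q); first exact: iter_in.
  by move=> k; rewrite -!iterD.
apply: bigcup_finite; first exact: finite_fset.
by move=> p _; apply: at_most_n_points_finite (W_small p).
Qed.

Theorem lemma2p4 (R : realType) (X : metricType R) (n : nat) (f : X -> X) :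
  compact [set: X] -> homeomorphism f -> pos_n_expansive n f ->
  (finite_set (Omega f) <-> finite_set [set: X]).
Proof.
move=> X_compact [g [fK _ f_cont _]] [c c_gt0 W_small].
split=> [/finite_fsetP[D OmegaE]|]; last exact: sub_finite_set.
have f_D : {homo f : q / q \in D}.
  move=> q qD; have : Omega f (f q) by apply: Omega_invariant => //; rewrite OmegaE.
  by rewrite OmegaE.
have [eta [[eta_gt0 eta_le_c] eta_shadow]] := filter_ex
  (filterI (filterI (nbhs_right_gt 0) (nbhs_right_le c_gt0)) (fset_shadowing f_cont f_D)).
apply: (sub_finite_set _ (finite_fset D)) => x _.
have [K _ x_attracted] := Omega_attracts f x X_compact eta_gt0.
have [k|q qD y_shadow] := eta_shadow (iter K f x).
  have [p Op px] := x_attracted (k + K)%N (leq_addl _ _).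
  exists p; first by rewrite OmegaE in Op.
  by rewrite -iterD metric_sym ltW.
have [k k_gt0 y_periodic] := finite_orbit_periodic (can_inj fK)
  (shadowed_orbit_finite W_small f_D qD (fun k => le_trans (y_shadow k) eta_le_c)).
have x_periodic : iter k f x = x.
  by apply: (@iter_inj _ f K (can_inj fK)); rewrite -iterD addnC iterD y_periodic.
by have := periodic_Omega k_gt0 x_periodic; rewrite OmegaE.
Qed.
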